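(* Let $n\geq1$. If $\psi$ is a Toom cycle in $G=G_{2n}(\mathbb T\ltimes\mathbb N^2)$ or in $G=G_{2n}(\mathbb N^2\ltimes\mathbb N^2)$, then there exists an integer $m\geq1$ such that: - the number of steps of each of the types su, sd, lu, ld, ru, rd in $\psi$ equals $m$; - $\psi$ passes through precisely $m+1$ distinct possible outcomes of the game (elements of $\partial G$).
   Context: **Decision graphs.** - $\mathbb T$ is the set of finite words over $\{1,2\}$ with root $\varnothing$, edges $\mathbf i\to\mathbf ik$, and $|\mathbf i|$ = length. - $\mathbb N^2$ has root $(0,0)$ and edges $(i,j)\to(i,j)1:=(i+1,j)$ and $(i,j)\to(i,j)2:=(i,j+1)$, with $|(i,j)|=i+j$. **Product and game-graph.** For $D^1\in\{\mathbb T,\mathbb N^2\}$, $D^1\ltimes\mathbb N^2$ has as vertices the pairs $(a,b)$ with $|a|=|b|$ (level $2|b|$) or $|a|=|b|+1$ (level $2|b|+1$), root $(0,0)$, edges $(a,b)\to(ak,b)$ from even levels and $(a,b)\to(a,bk)$ from odd levels. $G_{2n}(D^1\ltimes\mathbb N^2)$ is its restriction to levels $\leq 2n$. Level $2n$ is $\partial G$ (possible outcomes); interior vertices at even levels are Alice's turn and those at odd levels are Bob's. Let $\mathring G$ be the non-outcome vertices, $\vec A$ the set of edges $((a,b),(ak,b))$ from Alice-turn vertices, and $\vec B_k$ the set of edges $((a,b),(a,bk))$ from Bob-turn vertices. **Walks and step types.** A walk is $\psi_0\cdots\psi_l$ with each consecutive pair an edge or a reversed edge. The $k$-th step is: - su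 if $(\psi_{k-1},\psi_k)\in\vec A$, and sd if $(\psi_k,\psi_{k-1})\in\vec A$; - lu if $(\psi_{k-1},\psi_k)\in\vec B_2$, and ld if $(\psi_k,\psi_{k-1})\in\vec B_1$; - ru if $(\psi_{k-1},\psi_k)\in\vec B_1$, and rd if $(\psi_k,\psi_{k-1})\in\vec B_2$. Up types are su, lu, ru; down types are sd, ld, rd. Let - $N_\uparrow=\{0\}\cup\{0<k<l:$ steps $k,k+1$ up$\}$, - $N_\circ=\{0<k<l:$ step $k$ down, $k+1$ up$\}$, - $N_\downarrow=\{l\}\cup\{0<k<l:$ both down$\}$, - $N_\ast=\{0<k<l:$ step $k$ up, $k+1$ down$\}$. **Toom cycle.** A Toom cycle is a walk with $l\geq2$ satisfying all of the following. - $\psi_0=\psi_l=$ root; the first step is su or ru; the last step is sd or rd. - For $0<k<l$ with $\psi_k\in\mathring G$, the only allowed (step $k$ $\to$ step $k+1$) combinations are su$\to$ru, ru$\to$su, lu$\to$su, sd$\to$rd or ld, rd$\to$sd, ld$\to$lu. - For $\psi_k\in\partial G$, the only allowed combinations are su$\to$sd, ru$\to$rd or ld, lu$\to$rd or ld. - (i) $\psi_k\neq\psi_m$ for distinct $k,m\in N_\ast$. - (ii) If $\psi_k=\psi_m$ with $k\in N_s$, $m\in N_t$, $s\leq t$ in the order $\uparrow<\circ<\downarrow$, then $k\leq m$. *)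

From HB Require Import structures.
From mathcomp Require Import all_boot.
Set Implicit Arguments. Unset Strict Implicit. Unset Printing Implicit Defensive.

Inductive dir := d1 | d2.

Record DecGraph := { dvert : eqType; droot : dvert;
                     dchild : dvert -> dir -> dvert; dlen : dvert -> nat }.

Definition dir_eqb (x y : dir) : bool :=
  match x, y with d1, d1 | d2, d2 => true | _, _ => false end.
Lemma dir_eqP : Equality.axiom dir_eqb. Proof. by case; case; constructor. Qed.
HB.instance Definition _ := hasDecEq.Build dir dir_eqP.

Definition Tgraph : DecGraph :=
  {| dvert := seq dir; droot := [::]; dchild := fun w k => rcons w k;
     dlen := fun w => size w |}.

Definition child2 (b : nat * nat) (k : dir) : nat * nat :=
  match k with d1 => (b.1.+1, b.2) | d2 => (b.1, b.2.+1) end.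
Definition len2 (b : nat * nat) : nat := b.1 + b.2.

Definition N2graph : DecGraph :=
  {| dvert := (nat * nat)%type; droot := (0, 0); dchild := child2; dlen := len2 |}.

Section Game.
Variable D : DecGraph.
Variable n : nat.

Definition pvert := (dvert D * (nat * nat))%type.
Definition proot : pvert := (droot D, (0, 0)).
Definition level (v : pvert) := dlen v.1 + len2 v.2.

Definition inG (v : pvert) : bool :=
  ((dlen v.1 == len2 v.2) || (dlen v.1 == (len2 v.2).+1)) && (level v <= n.*2).
Definition outcome (v : pvert) : bool := inG v && (level v == n.*2).
Definition interior (v : pvert) : bool := inG v && (level v < n.*2).

Definition edgeA (x y : pvert) : bool :=
  [&& interior x, inG y, dlen x.1 == len2 x.2 &
     (y == (dchild x.1 d1, x.2)) || (y == (dchild x.1 d2, x.2))].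
Definition edgeB (k : dir) (x y : pvert) : bool :=
  [&& interior x, inG y, dlen x.1 == (len2 x.2).+1 & y == (x.1, child2 x.2 k)].

Inductive stype := SU | SD | LU | LD | RU | RD.

Definition is_step (t : stype) (x y : pvert) : bool :=
  match t with
  | SU => edgeA x y | SD => edgeA y x
  | LU => edgeB d2 x y | LD => edgeB d1 y x
  | RU => edgeB d1 x y | RD => edgeB d2 y x
  end.

Variable psi : nat -> pvert.
Variable l : nat.

(* step k goes from psi (k-1) to psi k *)
Definition step_is (t : stype) (k : nat) : bool := is_step t (psi k.-1) (psi k).
Definition step_up k := [|| step_is SU k, step_is LU k | step_is RU k].
Definition step_down k := [|| step_is SD k, step_is LD k | step_is RD k].

Definition is_walk : Prop :=
  forall k, 0 < k <= l -> step_up k || step_down k.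

Definition N_up k := (k == 0) || [&& 0 < k < l, step_up k & step_up k.+1].
Definition N_circ k := [&& 0 < k < l, step_down k & step_up k.+1].
Definition N_down k := (k == l) || [&& 0 < k < l, step_down k & step_down k.+1].
Definition N_ast k := [&& 0 < k < l, step_up k & step_down k.+1].

Definition allowed_interior (t1 t2 : stype) : bool :=
  match t1, t2 with
  | SU, RU | RU, SU | LU, SU | SD, RD | SD, LD | RD, SD | LD, LU => true
  | _, _ => false
  end.
Definition allowed_outcome (t1 t2 : stype) : bool :=
  match t1, t2 with
  | SU, SD | RU, RD | RU, LD | LU, RD | LU, LD => true
  | _, _ => false
  end.

Definition toom_cycle : Prop :=
  2 <= l /\ is_walk /\ psi 0 = proot /\ psi l = proot /\
      (step_is SU 1 || step_is RU 1) /\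
      (step_is SD l || step_is RD l) /\
      (forall k, 0 < k < l -> interior (psi k) -> forall t1 t2,
          step_is t1 k -> step_is t2 k.+1 -> allowed_interior t1 t2) /\
      (forall k, 0 < k < l -> outcome (psi k) -> forall t1 t2,
          step_is t1 k -> step_is t2 k.+1 -> allowed_outcome t1 t2) /\
      (forall k m, N_ast k -> N_ast m -> k <> m -> psi k <> psi m) /\
      (* (ii), with the order up < circ < down *)
      (forall k m, psi k = psi m ->
         [|| N_up k && [|| N_up m, N_circ m | N_down m],
             N_circ k && (N_circ m || N_down m) |
             N_down k && N_down m] -> k <= m).

Definition nsteps (t : stype) : nat := count (step_is t) (iota 1 l).
Definition noutcomes : nat :=
  size (undup [seq psi k | k <- iota 0 l.+1 & outcome (psi k)]).

End Game.

From HB Require Import structures.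
From mathcomp Require Import all_boot zify.
Set Implicit Arguments. Unset Strict Implicit. Unset Printing Implicit Defensive.

(* Every step changes the level by one, and its type is determined by its two
   endpoints.  A vertex of odd level is never an outcome (outcomes have level
   2n), and there the allowed transitions are forced: SU -> RU, LD -> LU,
   RD -> SD, so each of these pairs of types occurs equally often.  Along the
   closed walk the two coordinates of the N^2 component return to 0; only RU
   and LD change the first one and only LU and RD the second one, so
   #RU = #LD and #LU = #RD, and all six counts are some m >= 1.  Outcomes are
   exactly the peaks of the up/down sequence, and they are pairwise distinct by
   condition (i); valleys are exactly the LD steps.  A walk that starts up and
   ends down has one more peak than valleys, whence m + 1 outcomes. *)

Lemma count_iota_dropl (P : pred nat) l : ~~ P l ->
  count P (iota 1 l) = count P (iota 1 l.-1).
Proof.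
case: l => [|l] // /negbTE Pl.
by rewrite succnK -[l.+1]addn1 iotaD count_cat /= add1n Pl !addn0.
Qed.

Lemma count_iota_shift (P Q : pred nat) l :
  (forall k, 0 < k < l -> P k = Q k.+1) -> ~~ P l -> ~~ Q 1 ->
  count P (iota 1 l) = count Q (iota 1 l).
Proof.
case: l => [|l] // PQ /count_iota_dropl -> /negbTE Q1 /=.
rewrite Q1 (iotaDl 1 1) count_map; apply: eq_in_count => k.
by rewrite mem_iota => k_lt; rewrite /= PQ //; lia.
Qed.

Lemma count_iota_telescope (f : nat -> nat) (P Q : pred nat) l :
  (forall k, 0 < k <= l -> f k + Q k = f k.-1 + P k) ->
  f l + count Q (iota 1 l) = f 0 + count P (iota 1 l).
Proof.
elim: l => [|l IHl] fPQ; first by rewrite !addn0.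
have /IHl : forall k, 0 < k <= l -> f k + Q k = f k.-1 + P k.
  by move=> k k_le; apply: fPQ; lia.
rewrite -[l.+1]addn1 iotaD !count_cat /= add1n addn1.
by have /= := fPQ l.+1 (ltnSn l); lia.
Qed.

Lemma count_iota_descents (u : nat -> bool) l : u 1 -> ~~ u l.+1 ->
  count (fun k => u k && ~~ u k.+1) (iota 1 l) =
  (count (fun k => ~~ u k && u k.+1) (iota 1 l)).+1.
Proof.
move=> u1 /negbTE ul; suff : count (fun k => u k && ~~ u k.+1) (iota 1 l) + u l.+1 =
    count (fun k => ~~ u k && u k.+1) (iota 1 l) + u 1 by rewrite u1 ul; lia.
elim: l {ul} => [|l IHl] //; rewrite -[l.+1]addn1 iotaD !count_cat /= add1n addn1.
by case: (u l.+1) IHl; case: (u l.+2) => /=; lia.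
Qed.

(* Transparent, so that [==] on constructors of [stype] computes. *)
Lemma stype_eq_dec : comparable stype.
Proof. by move=> s t; rewrite /decidable; decide equality. Defined.
HB.instance Definition _ := comparableMixin stype_eq_dec.

Definition up (t : stype) : bool :=
  match t with SU | LU | RU => true | _ => false end.

Definition label (t : stype) : option dir :=
  match t with SU | SD => None | RU | LD => Some d1 | LU | RD => Some d2 end.

Definition ends_odd (t : stype) : bool :=
  match t with SU | LD | RD => true | _ => false end.

(* For [ends_odd t], the only type allowed right after [t] at the odd-level vertex
   that [t] reaches. *)
Definition partner (t : stype) : stype :=
  match t with SU => RU | LD => LU | RD => SD | _ => t end.

Lemma stype_inj (s t : stype) : up s = up t -> label s = label t -> s = t.
Proof. by case: s; case: t. Qed.

Lemma len2_child2 b k : len2 (child2 b k) = (len2 b).+1.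
Proof. by case: k; rewrite /len2 /= ?addnS. Qed.

Lemma child2_inj (b : nat * nat) : injective (child2 b).
Proof. by case: b => ? ? [] [] //= [] /eqP; lia. Qed.

Section GradedGame.
Variable D : DecGraph.
Hypothesis dlen_root : dlen (droot D) = 0.
Hypothesis dlen_child : forall (a : dvert D) k, dlen (dchild a k) = (dlen a).+1.
Variable n : nat.
Hypothesis n_gt0 : 0 < n.

Definition edge (o : option dir) : rel (pvert D) :=
  if o is Some k then edgeB n k else edgeA n.

Lemma is_stepE t (x y : pvert D) :
  is_step n t x y = if up t then edge (label t) x y else edge (label t) y x.
Proof. by case: t. Qed.

Lemma edge_spec o (x y : pvert D) : edge o x y ->
  [/\ inG n x, inG n y, level y = (level x).+1, odd (level x) = isSome o &
      y.2 = if o is Some k then child2 x.2 k else x.2].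
Proof.
case: o => [k|] /and4P[/andP[inGx _] inGy /eqP lenx].
  move/eqP=> y_def; rewrite y_def /level /= len2_child2 lenx in inGy *.
  by split=> //; lia.
case/orP=> /eqP y_def; rewrite y_def /level /= dlen_child lenx in inGy *;
  by split=> //; lia.
Qed.

Lemma edge_label_uniq o1 o2 (x y : pvert D) : edge o1 x y -> edge o2 x y -> o1 = o2.
Proof.
case/edge_spec=> _ _ _ odd1 y1 /edge_spec[_ _ _ odd2 y2].
by case: o1 o2 odd1 odd2 y1 y2 => [k1|] [k2|] //= -> // _ -> /child2_inj ->.
Qed.

Lemma is_step_uniq t1 t2 (x y : pvert D) :
  is_step n t1 x y -> is_step n t2 x y -> t1 = t2.
Proof.
rewrite !is_stepE; case up1: (up t1); case up2: (up t2).
- by move=> e1 e2; apply: stype_inj; rewrite ?up1 ?up2 // (edge_label_uniq e1 e2).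
- by move=> /edge_spec[_ _ lxy _ _] /edge_spec[_ _ lyx _ _]; lia.
- by move=> /edge_spec[_ _ lyx _ _] /edge_spec[_ _ lxy _ _]; lia.
- by move=> e1 e2; apply: stype_inj; rewrite ?up1 ?up2 // (edge_label_uniq e1 e2).
Qed.

Lemma is_step_inG t (x y : pvert D) : is_step n t x y -> inG n x /\ inG n y.
Proof. by rewrite is_stepE; case: (up t) => /edge_spec[]. Qed.

Lemma is_step_odd t (x y : pvert D) : is_step n t x y ->
  odd (level x) = ~~ ends_odd t /\ odd (level y) = ends_odd t.
Proof. by rewrite is_stepE; case: t => /edge_spec[_ _ -> /= -> _]. Qed.

Lemma is_step_coord t (x y : pvert D) : is_step n t x y ->
  y.2.1 + (t == LD) = x.2.1 + (t == RU) /\ y.2.2 + (t == RD) = x.2.2 + (t == LU).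
Proof. by rewrite is_stepE; case: t => /edge_spec[_ _ _ _ ->] /=; lia. Qed.

Lemma level_root : level (proot D) = 0.
Proof. by rewrite /level /= dlen_root. Qed.

Lemma outcome_root : outcome n (proot D) = false.
Proof. by rewrite /outcome level_root eq_sym double_eq0 eqn0Ngt n_gt0 andbF. Qed.

Lemma outcome_odd (v : pvert D) : odd (level v) -> outcome n v = false.
Proof. by rewrite /outcome; case: eqP => [->|]; rewrite ?odd_double ?andbF. Qed.

Lemma interiorE (v : pvert D) : inG n v -> interior n v = ~~ outcome n v.
Proof.
by move=> /[dup] inGv /andP[_ le]; rewrite /interior /outcome inGv ltn_neqAle le andbT.
Qed.

Section ToomCycle.
Variables (psi : nat -> pvert D) (l : nat).

Local Notation step_is := (step_is n psi).
Local Notation step_up := (step_up n psi).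
Local Notation nsteps := (nsteps n psi l).

Hypothesis l_ge2 : 2 <= l.
Hypothesis psi_walk : is_walk n psi l.
Hypotheses (psi0 : psi 0 = proot D) (psil : psi l = proot D).
Hypothesis first_step : step_is SU 1 || step_is RU 1.
Hypothesis last_step : step_is SD l || step_is RD l.
Hypothesis interior_allowed : forall k, 0 < k < l -> interior n (psi k) ->
  forall t1 t2, step_is t1 k -> step_is t2 k.+1 -> allowed_interior t1 t2.
Hypothesis outcome_allowed : forall k, 0 < k < l -> outcome n (psi k) ->
  forall t1 t2, step_is t1 k -> step_is t2 k.+1 -> allowed_outcome t1 t2.
Hypothesis ast_inj :
  forall k m, N_ast n psi l k -> N_ast n psi l m -> k <> m -> psi k <> psi m.

Lemma step_exists k : 0 < k <= l -> exists t, step_is t k.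
Proof. by move/psi_walk=> /orP[] /or3P[] step; eexists; exact: step. Qed.

Lemma step_isE t t' k : step_is t k -> step_is t' k = (t' == t).
Proof. by move=> st; apply/idP/eqP => [/is_step_uniq/(_ st)|->]. Qed.

Lemma step_upE t k : step_is t k -> step_up k = up t.
Proof. by move=> st; rewrite /step_up !(step_isE _ st); case: t {st}. Qed.

Lemma step_downE t k : step_is t k -> step_down n psi k = ~~ up t.
Proof. by move=> st; rewrite /step_down !(step_isE _ st); case: t {st}. Qed.

Lemma step_transition k t1 t2 : 0 < k < l -> step_is t1 k -> step_is t2 k.+1 ->
  if outcome n (psi k) then allowed_outcome t1 t2 else allowed_interior t1 t2.
Proof.
move=> k_lt st1 st2; have [_ /interiorE psik] := is_step_inG st1.
case: ifP => [out|not_out]; first exact: outcome_allowed st1 st2.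
by apply: interior_allowed st1 st2; rewrite // psik not_out.
Qed.

Lemma ends_odd_first t : step_is t 1 -> ends_odd t.
Proof. by case/is_step_odd; rewrite /= psi0 level_root => /esym/negbFE. Qed.

Lemma ends_odd_last t : step_is t l -> ~~ ends_odd t.
Proof. by case/is_step_odd => _; rewrite psil level_root => <-. Qed.

Lemma first_step_SU : step_is SU 1.
Proof. by case/orP: first_step => // /ends_odd_first. Qed.

Lemma last_step_SD : step_is SD l.
Proof. by case/orP: last_step => // /ends_odd_last. Qed.

Lemma step_is_partner k t : 0 < k < l -> ends_odd t ->
  step_is t k = step_is (partner t) k.+1.
Proof.
move=> k_lt odd_t.
have [|t1 st1] := @step_exists k; first lia.
have [|t2 st2] := @step_exists k.+1; first lia.
rewrite (step_isE _ st1) (step_isE _ st2).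
have [_ odd1] := is_step_odd st1; have [/= odd2 _] := is_step_odd st2.
have odd12 : ends_odd t2 = ~~ ends_odd t1 by rewrite -odd1 odd2 negbK.
have out_even : outcome n (psi k) -> ~~ ends_odd t1.
  by apply: contraTN; rewrite -odd1 => /outcome_odd ->.
case: (outcome _) out_even (step_transition k_lt st1 st2) => [/(_ isT)|_];
  by case: t odd_t; case: t1 {st1 odd1} odd12; case: t2 {st2 odd2}.
Qed.

Lemma nsteps_partner t : ends_odd t -> nsteps (partner t) = nsteps t.
Proof.
move=> odd_t; symmetry; apply: count_iota_shift.
- by move=> k k_lt; apply: step_is_partner.
- by apply: contraTN odd_t => /ends_odd_last.
- by apply: contraTN odd_t => /ends_odd_first; case: t.
Qed.

Lemma nsteps_RU_LD : nsteps RU = nsteps LD.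
Proof.
suff: (psi l).2.1 + nsteps LD = (psi 0).2.1 + nsteps RU by rewrite psi0 psil; lia.
apply: (count_iota_telescope (f := fun k => (psi k).2.1)) => k /step_exists[t st].
by rewrite !(step_isE _ st); case: (is_step_coord st); rewrite !(eq_sym t).
Qed.

Lemma nsteps_LU_RD : nsteps LU = nsteps RD.
Proof.
suff: (psi l).2.2 + nsteps RD = (psi 0).2.2 + nsteps LU by rewrite psi0 psil; lia.
apply: (count_iota_telescope (f := fun k => (psi k).2.2)) => k /step_exists[t st].
by rewrite !(step_isE _ st); case: (is_step_coord st); rewrite !(eq_sym t).
Qed.

Lemma nsteps_const t : nsteps t = nsteps SU.
Proof.
have := @nsteps_partner SU isT; have := @nsteps_partner LD isT.
have := @nsteps_partner RD isT; have := nsteps_RU_LD; have := nsteps_LU_RD.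
by case: t => /=; lia.
Qed.

Lemma nsteps_SU_gt0 : 0 < nsteps SU.
Proof.
by rewrite -has_count; apply/hasP; exists 1; rewrite ?mem_iota ?first_step_SU //; lia.
Qed.

Lemma step_downNup k : 0 < k <= l -> step_down n psi k = ~~ step_up k.
Proof. by case/step_exists=> t st; rewrite (step_upE st) (step_downE st). Qed.

Lemma outcome_peak k : 0 < k < l -> outcome n (psi k) = step_up k && ~~ step_up k.+1.
Proof.
move=> k_lt; have [|t1 st1] := @step_exists k; first lia.
have [|t2 st2] := @step_exists k.+1; first lia.
rewrite (step_upE st1) (step_upE st2).
by case: (outcome _) (step_transition k_lt st1 st2); case: t1 {st1}; case: t2 {st2}.
Qed.

Lemma valley_LD k : 0 < k < l -> ~~ step_up k && step_up k.+1 = step_is LD k.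
Proof.
move=> k_lt; have [|t1 st1] := @step_exists k; first lia.
have [|t2 st2] := @step_exists k.+1; first lia.
rewrite (step_upE st1) (step_upE st2) (step_isE _ st1).
by case: (outcome _) (step_transition k_lt st1 st2); case: t1 {st1}; case: t2 {st2}.
Qed.

Lemma outcome_inner k : k <= l -> outcome n (psi k) -> 0 < k < l.
Proof.
case: k => [|k] k_le; first by rewrite psi0 outcome_root.
by case: (ltngtP k.+1 l) k_le => // ->; rewrite psil outcome_root.
Qed.

Lemma outcomes_uniq : uniq [seq psi k | k <- iota 0 l.+1 & outcome n (psi k)].
Proof.
have outcome_ast k : k <= l -> outcome n (psi k) -> N_ast n psi l k.
  move=> k_le /[dup] /(outcome_inner k_le) k_lt.
  by rewrite /N_ast k_lt outcome_peak // step_downNup //; lia.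
rewrite map_inj_in_uniq ?filter_uniq ?iota_uniq // => j k.
rewrite !mem_filter !mem_iota /= !add0n !ltnS => /andP[oj jl] /andP[ok kl] psi_jk.
case: (eqVneq j k) => // /eqP neq.
by case: (ast_inj (outcome_ast j jl oj) (outcome_ast k kl ok) neq psi_jk).
Qed.

Lemma noutcomes_nsteps : noutcomes n psi l = (nsteps LD).+1.
Proof.
rewrite /noutcomes (undup_id outcomes_uniq) size_map size_filter /= psi0 outcome_root.
rewrite (count_iota_dropl (P := fun k => outcome n (psi k))); last first.
  by apply/negP => /(outcome_inner (leqnn l)); lia.
rewrite /nsteps (count_iota_dropl (P := step_is LD)); last first.
  by apply/negP => /ends_odd_last.
rewrite -(eq_in_count (a1 := fun k => ~~ step_up k && step_up k.+1)
  (a2 := step_is LD)); last first.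
  by move=> k; rewrite mem_iota => k_lt; apply: valley_LD; lia.
rewrite (eq_in_count (a1 := fun k => outcome n (psi k))
  (a2 := fun k => step_up k && ~~ step_up k.+1)); last first.
  by move=> k; rewrite mem_iota => k_lt; apply: outcome_peak; lia.
apply: count_iota_descents; first by rewrite (step_upE first_step_SU).
by rewrite prednK ?(step_upE last_step_SD) //; lia.
Qed.

Lemma toom_cycle_counts : exists m, 1 <= m /\
  (forall t, nsteps t = m) /\ noutcomes n psi l = m.+1.
Proof.
exists (nsteps SU); split; first exact: nsteps_SU_gt0.
by split; [exact: nsteps_const | rewrite noutcomes_nsteps nsteps_const].
Qed.
End ToomCycle.
End GradedGame.

Theorem lemma11 :
  forall (D : DecGraph), (D = Tgraph \/ D = N2graph) ->
  forall (n : nat) (psi : nat -> pvert D) (l : nat),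
    1 <= n -> toom_cycle n psi l ->
    exists m : nat, 1 <= m /\
      (forall t : stype, nsteps n psi l t = m) /\
      noutcomes n psi l = m.+1.
Proof.
move=> D D_def n psi l n_gt0.
case=> l_ge2 [walk [psi0 [psil [first [last [in_ok [out_ok [ast_inj _]]]]]]]].
have dlen_root : dlen (droot D) = 0 by case: D_def => ->.
have dlen_child (a : dvert D) k : dlen (dchild a k) = (dlen a).+1.
  by case: D_def a => -> a; rewrite /= ?size_rcons ?len2_child2.
exact: (toom_cycle_counts dlen_root dlen_child n_gt0 l_ge2 walk psi0 psil
  first last in_ok out_ok ast_inj).
Qed.
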